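(* Let $b,c\in Z^{10}$ with $\sum_i b_i=\sum_i c_i=0$, and assume $t\nmid B_i$ and $t\nmid C_i$ for all odd $i$. Let $l$ be odd such that $t\mid B_l+B_{l+2}$, $t\mid B_{l+2}+B_{l+4}$, $t\nmid B_i+B_{i+2}$ for all odd $i\notin\{l,l+2\}$, and likewise $t\mid C_l+C_{l+2}$, $t\mid C_{l+2}+C_{l+4}$, $t\nmid C_i+C_{i+2}$ for all odd $i\notin\{l,l+2\}$ (indices mod $10$). Then $\mathbb{M}(b)$ and $\mathbb{M}(c)$ are isomorphic $B_{5,10}$-modules.
   Context: Let $Z=\mathbb{C}[[t]]$. Let $\Gamma_{10}$ be the quiver with vertices $0,1,\dots,9$ (indices taken mod $10$) on a cycle and arrows $x_i\colon i-1\to i$, $y_i\colon i\to i-1$ for $i=1,\dots,10$. Let $B_{5,10}$ be the completed path algebra of $\Gamma_{10}$ modulo the closed ideal generated by $xy=yx$ and $x^5=y^5$ at every vertex. For $b=(b_1,\dots,b_{10})\in Z^{10}$ with $\sum_i b_i=0$, the $B_{5,10}$-module $\mathbb{M}(b)$ has $V_i=Z\oplus Z$ at every vertex, and for odd $j$: $x_j=\begin{pmatrix} t& b_j\\ 0&1\end{pmatrix}$, $y_j=\begin{pmatrix} 1&-b_j\\0&t\end{pmatrix}$; for even $j$: $x_j=\begin{pmatrix}1&b_j\\0&t\end{pmatrix}$, $y_j=\begin{pmatrix}t&-b_j\\0&1\end{pmatrix}$. An isomorphism $\mathbb{M}(b)\to\mathbb{M}(c)$ is a family of invertible $Z$-linear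 maps $\varphi_i\colon Z^2\to Z^2$ commuting with all $x_i$ and $y_i$. For odd $i$ write $B_i=b_i+b_{i+1}$ and $C_i=c_i+c_{i+1}$ (indices mod $10$). *)

From HB Require Import structures.
From mathcomp Require Import all_boot all_order all_algebra.
From mathcomp Require Import boolp.
From mathcomp Require Import complex.
From mathcomp Require Import Rstruct.
Set Implicit Arguments. Unset Strict Implicit. Unset Printing Implicit Defensive.
Import Order.TTheory GRing.Theory Num.Theory.
Local Open Scope ring_scope.

Record fps (K : Type) := FPS { coeff : nat -> K }.
Arguments FPS {K} _.
Arguments coeff {K} _ _.

Lemma fps_ext (K : Type) (f g : fps K) : coeff f =1 coeff g -> f = g.
Proof. by case: f; case: g => g f /funext /= ->. Qed.

HB.instance Definition _ (K : Type) := gen_eqMixin (fps K).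
HB.instance Definition _ (K : Type) := gen_choiceMixin (fps K).

Section FPSRing.
Variable K : comNzRingType.

Definition fps0 : fps K := FPS (fun _ => 0).
Definition fpsD (f g : fps K) : fps K := FPS (fun n => coeff f n + coeff g n).
Definition fpsN (f : fps K) : fps K := FPS (fun n => - coeff f n).
Definition fps1 : fps K := FPS (fun n => (n == 0%N)%:R).
Definition fpsM (f g : fps K) : fps K :=
  FPS (fun n => \sum_(i < n.+1) coeff f i * coeff g (n - i)%N).

Lemma fpsDA : associative fpsD.
Proof. by move=> f g h; apply: fps_ext => n /=; rewrite addrA. Qed.
Lemma fpsDC : commutative fpsD.
Proof. by move=> f g; apply: fps_ext => n /=; rewrite addrC. Qed.
Lemma fps0D : left_id fps0 fpsD.
Proof. by move=> f; apply: fps_ext => n /=; rewrite add0r. Qed.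
Lemma fpsND : left_inverse fps0 fpsN fpsD.
Proof. by move=> f; apply: fps_ext => n /=; rewrite addNr. Qed.

HB.instance Definition _ := GRing.isZmodule.Build (fps K) fpsDA fpsDC fps0D fpsND.

Definition trunc (n : nat) (f : fps K) : {poly K} := \poly_(i < n.+1) coeff f i.

Lemma fpsM_poly n (f g : fps K) (P Q : {poly K}) :
  (forall i, (i <= n)%N -> P`_i = coeff f i) ->
  (forall i, (i <= n)%N -> Q`_i = coeff g i) ->
  coeff (fpsM f g) n = (P * Q)`_n.
Proof.
move=> hP hQ; rewrite coefM /=; apply: eq_bigr => i _.
by rewrite hP ?hQ ?leq_subr // -ltnS.
Qed.

Lemma truncE n (f : fps K) i : (i <= n)%N -> (trunc n f)`_i = coeff f i.
Proof. by move=> hi; rewrite coef_poly ltnS hi. Qed.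

Lemma fpsM_trunc n (f g : fps K) i : (i <= n)%N ->
  (trunc n f * trunc n g)`_i = coeff (fpsM f g) i.
Proof.
move=> hi; symmetry; apply: fpsM_poly => j hj; apply: truncE;
  exact: leq_trans hj hi.
Qed.

Lemma fpsMA : associative fpsM.
Proof.
move=> f g h; apply: fps_ext => n.
rewrite (@fpsM_poly n f (fpsM g h) (trunc n f) (trunc n g * trunc n h));
  last 2 first.
- by move=> i hi; rewrite truncE.
- by move=> i hi; rewrite fpsM_trunc.
rewrite (@fpsM_poly n (fpsM f g) h (trunc n f * trunc n g) (trunc n h)).
- by rewrite mulrA.
- by move=> i hi; rewrite fpsM_trunc.
- by move=> i hi; rewrite truncE.
Qed.

Lemma fpsMC : commutative fpsM.
Proof.
move=> f g; apply: fps_ext => n.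
by rewrite -(@fpsM_trunc n) // -[RHS](@fpsM_trunc n) // mulrC.
Qed.

Lemma fps1M : left_id fps1 fpsM.
Proof.
move=> f; apply: fps_ext => n.
rewrite (@fpsM_poly n fps1 f 1 (trunc n f)).
- by rewrite mul1r truncE.
- by move=> i _; rewrite coef1.
- by move=> i hi; rewrite truncE.
Qed.

Lemma fpsMDl : left_distributive fpsM fpsD.
Proof.
move=> f g h; apply: fps_ext => n /=.
by rewrite -big_split /=; apply: eq_bigr => i _; rewrite mulrDl.
Qed.

Lemma fps1_neq0 : fps1 != fps0.
Proof.
apply/eqP => /(congr1 (fun f => coeff f 0%N)) /= /eqP.
by rewrite oner_eq0.
Qed.

HB.instance Definition _ :=
  GRing.Zmodule_isComNzRing.Build (fps K) fpsMA fpsMC fps1M fpsMDl fps1_neq0.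

Definition fps_t : fps K := FPS (fun n => (n == 1%N)%:R).

End FPSRing.

Definition CC : Type := (Rdefinitions.R)[i].
Definition Z : comNzRingType := fps CC.
Definition t : Z := fps_t CC.

Definition dvdZ (a f : Z) : Prop := exists g : Z, f = a * g.

(* indices (of arrows / vertices / entries of b) taken mod 10;
   the index j in {1,...,10} is represented by j mod 10 in 'I_10,
   so that vertex 10 = vertex 0 and b_10 = b 0; parity is preserved. *)
Definition idx (k : nat) : 'I_10 := inord (k %% 10).

Definition mx2 (a b c d : Z) : 'M[Z]_2 :=
  \matrix_(r < 2, s < 2)
    if r == 0 then (if s == 0 then a else b) else (if s == 0 then c else d).

(* The matrices of the arrows x_j : j-1 -> j and y_j : j -> j-1 of M(b),
   acting on column vectors of V_i = Z (+) Z. *)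
Definition xmat (b : 'I_10 -> Z) (j : 'I_10) : 'M[Z]_2 :=
  if odd j then mx2 (t) (b j) (0) (1)
  else mx2 (1) (b j) (0) (t).

Definition ymat (b : 'I_10 -> Z) (j : 'I_10) : 'M[Z]_2 :=
  if odd j then mx2 (1) (- b j) (0) (t)
  else mx2 (t) (- b j) (0) (1).

(* An isomorphism M(b) -> M(c): invertible Z-linear maps phi_i : Z^2 -> Z^2
   (i.e. invertible 2x2 matrices over Z), one per vertex, commuting with
   all x_j : j-1 -> j and y_j : j -> j-1. *)
Definition invertible_mx (A : 'M[Z]_2) : Prop :=
  exists B : 'M[Z]_2, A *m B = 1%:M /\ B *m A = 1%:M.

Definition Miso (b c : 'I_10 -> Z) : Prop :=
  exists phi : 'I_10 -> 'M[Z]_2,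
    (forall i, invertible_mx (phi i)) /\
    (forall j : 'I_10,
       phi j *m xmat b j = xmat c j *m phi (idx (j + 9))) /\
    (forall j : 'I_10,
       phi (idx (j + 9)) *m ymat b j = ymat c j *m phi j).

Definition Bsum (b : 'I_10 -> Z) (i : 'I_10) : Z := b i + b (idx (i + 1)).

(* Rotate the cycle so that the distinguished odd index l becomes position 1,
   and build the isomorphism as a chain of 2x2 matrices Phi_k (k = 0..10)
   along the rotated path.  With B_k, C_k the partial sums of b, c and
   V_k = sg C_k - pi B_k - rh B_k C_k, put
     Phi_k = [pi + rh C_k, V_k ; rh, sg - rh B_k]          (k odd),
     Phi_k = [pi + rh C_k, V_k / t ; t rh, sg - rh B_k]    (k even),
   for constants pi, sg, rh.  Each square "Phi_k x_k = x_k Phi_(k-1)" is a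
   polynomial identity once t | V_k for even k, det Phi_k = pi sg, and
   B_10 = C_10 = 0 closes the chain (Phi_10 = Phi_0).  Divisibility by t only
   involves constant terms: the hypotheses force the constant terms of
   B_0, B_2, ..., B_10 to be 0, a, 0, a, -y, 0, and the choice
   pi = e y' (a + y), sg = a y (e + y'), rh = e y - a y' kills all of them
   simultaneously, with pi sg <> 0. *)

From HB Require Import structures.
From mathcomp Require Import all_boot all_order all_algebra.
From mathcomp Require Import ring zify.
From mathcomp Require Import complex Rstruct.
Set Implicit Arguments. Unset Strict Implicit. Unset Printing Implicit Defensive.
Import GRing.Theory.
Local Open Scope ring_scope.

Local Notation CR := (Rdefinitions.R)[i].

Definition c0 (f : Z) : CR := coeff f 0.

Lemma c0D f g : c0 (f + g) = c0 f + c0 g. Proof. by []. Qed.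
Lemma c0N f : c0 (- f) = - c0 f. Proof. by []. Qed.
Lemma c0M f g : c0 (f * g) = c0 f * c0 g. Proof. by rewrite /c0 /= big_ord1. Qed.
Lemma c0t : c0 t = 0. Proof. by []. Qed.

Lemma c0_sum n (F : 'I_n -> Z) : c0 (\sum_(i < n) F i) = \sum_(i < n) c0 (F i).
Proof. exact: (big_morph c0 c0D). Qed.

Definition shift (f : Z) : Z := FPS (fun n => coeff f n.+1).

Lemma coeff_tM (f : Z) n : coeff (t * f) n.+1 = coeff f n.
Proof.
rewrite /= big_ord_recl big_ord_recl /= !mul0r !mul1r add0r subn1 /=.
by rewrite big1 ?addr0 // => i _; rewrite mul0r.
Qed.

Lemma t_shift (f : Z) : c0 f = 0 -> t * shift f = f.
Proof.
move=> f0; apply: fps_ext => -[|n]; last exact: coeff_tM.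
by rewrite -[LHS]/(c0 (t * shift f)) c0M c0t mul0r -f0.
Qed.

Lemma dvdZ_t (f : Z) : dvdZ t f <-> c0 f = 0.
Proof.
split=> [[g ->]|f0]; last by exists (shift f); rewrite t_shift.
by rewrite c0M c0t mul0r.
Qed.

Definition cst (a : CR) : Z := FPS (fun n => if n == 0%N then a else 0).

Lemma c0_cst a : c0 (cst a) = a. Proof. by []. Qed.
Lemma cst1 : cst 1 = 1. Proof. by apply: fps_ext => -[|n]. Qed.
Lemma cstM a b : cst a * cst b = cst (a * b).
Proof.
apply: fps_ext => -[|n] /=; first by rewrite big_ord1.
by rewrite big1 // => -[[|i] hi] _; rewrite /= ?subn0 ?mulr0 ?mul0r.
Qed.

Lemma mx2_mul a b c d a' b' c' d' :
  mx2 a b c d *m mx2 a' b' c' d' =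
  mx2 (a * a' + b * c') (a * b' + b * d') (c * a' + d * c') (c * b' + d * d').
Proof.
apply/matrixP => i j; rewrite !mxE !big_ord_recl big_ord0 !mxE.
by case: i => [[|[|//]] Hi]; case: j => [[|[|//]] Hj]; rewrite addr0.
Qed.

Lemma mx2_det a b c d : \det (mx2 a b c d) = a * d - b * c.
Proof.
rewrite (expand_det_row _ ord0) !big_ord_recl big_ord0 /cofactor !det_mx11 !mxE /=.
rewrite !expr0 !expr1; ring.
Qed.

Lemma mx2_invertible a b c d u :
  a * d - b * c = cst u -> u != 0 -> invertible_mx (mx2 a b c d).
Proof.
rewrite -mx2_det => detA u0; exists (cst u^-1 *: \adj (mx2 a b c d)).
rewrite -scalemxAr -scalemxAl mul_mx_adj mul_adj_mx detA scale_scalar_mx.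
by rewrite cstM mulVf // cst1.
Qed.

Definition XB (f : nat -> Z) (k : nat) : 'M[Z]_2 :=
  if odd k then mx2 t (f k) 0 1 else mx2 1 (f k) 0 t.
Definition YB (f : nat -> Z) (k : nat) : 'M[Z]_2 :=
  if odd k then mx2 1 (- f k) 0 t else mx2 t (- f k) 0 1.

(* Passing one arrow with labels b (source
   module) and c (target module) updates the diagonal by c r and - b r, and
   the corner by c s - b p - b c r, where the corner is scaled by t at even
   vertices. *)
Lemma odd_square p q q1 s r b c :
  q1 = t * q + c * s - b * p - b * c * r ->
  mx2 (p + c * r) q1 r (s - b * r) *m mx2 t b 0 1 = mx2 t c 0 1 *m mx2 p q (t * r) s /\
  mx2 p q (t * r) s *m mx2 1 (- b) 0 t = mx2 1 (- c) 0 t *m mx2 (p + c * r) q1 r (s - b * r).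
Proof. by move=> ->; rewrite !mx2_mul; split; congr mx2; ring. Qed.

Lemma even_square p q q1 s r b c :
  t * q = q1 + c * s - b * p - b * c * r ->
  mx2 (p + c * r) q (t * r) (s - b * r) *m mx2 1 b 0 t = mx2 1 c 0 t *m mx2 p q1 r s /\
  mx2 p q1 r s *m mx2 t (- b) 0 1 = mx2 t (- c) 0 1 *m mx2 (p + c * r) q (t * r) (s - b * r).
Proof.
move=> tq; have -> : q1 = t * q - c * s + b * p + b * c * r by rewrite tq; ring.
by rewrite !mx2_mul; split; congr mx2; ring.
Qed.

Definition psum (f : nat -> Z) (k : nat) : Z := \sum_(i < k) f i.+1.

Lemma psumS f k : psum f k.+1 = psum f k + f k.+1.
Proof. by rewrite /psum big_ord_recr. Qed.

Lemma psum_pairs f n :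
  psum f (2 * n) = \sum_(j < n) (f (2 * j).+1 + f (2 * j).+2).
Proof.
elim: n => [|n IH]; first by rewrite /psum !big_ord0.
by rewrite mulnS !psumS big_ord_recr /= -IH addrA.
Qed.

Section Intertwiner.
Variables (bb cc : nat -> Z) (pi sg rh : CR).

Definition diagl k := cst pi + cst rh * psum cc k.
Definition diagr k := cst sg - cst rh * psum bb k.
Definition corner k :=
  cst sg * psum cc k - cst pi * psum bb k - cst rh * psum bb k * psum cc k.

Definition Mat k : 'M[Z]_2 :=
  if odd k then mx2 (diagl k) (corner k) (cst rh) (diagr k)
  else mx2 (diagl k) (shift (corner k)) (t * cst rh) (diagr k).

Lemma diaglS k : diagl k.+1 = diagl k + cc k.+1 * cst rh.
Proof. by rewrite /diagl psumS; ring. Qed.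

Lemma diagrS k : diagr k.+1 = diagr k - bb k.+1 * cst rh.
Proof. by rewrite /diagr psumS; ring. Qed.

(* The corner obeys exactly the update rule of the elementary squares. *)
Lemma cornerS k : corner k.+1 =
  corner k + cc k.+1 * diagr k - bb k.+1 * diagl k - bb k.+1 * cc k.+1 * cst rh.
Proof. by rewrite /corner /diagl /diagr !psumS; ring. Qed.

(* The determinant of Mat k does not depend on k. *)
Lemma corner_det k : diagl k * diagr k - corner k * cst rh = cst (pi * sg).
Proof. by rewrite /diagl /diagr /corner -cstM; ring. Qed.

Lemma c0_corner k : c0 (corner k) =
  sg * c0 (psum cc k) - pi * c0 (psum bb k) - rh * c0 (psum bb k) * c0 (psum cc k).
Proof. by rewrite /corner !(c0D, c0M, c0N, c0_cst). Qed.

Variable N : nat.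
Hypothesis corner_t : forall k, ~~ odd k -> (k <= N)%N -> c0 (corner k) = 0.

Lemma Mat_step k : (k < N)%N ->
  Mat k.+1 *m XB bb k.+1 = XB cc k.+1 *m Mat k /\
  Mat k *m YB bb k.+1 = YB cc k.+1 *m Mat k.+1.
Proof.
move=> kN; rewrite /Mat /XB /YB /= diaglS diagrS.
case: (boolP (odd k)) => hk /=.
  apply: even_square; rewrite t_shift; first exact: cornerS.
  by apply: corner_t; rewrite /= ?hk.
apply: odd_square; rewrite cornerS t_shift //.
by apply: corner_t; rewrite // ltnW.
Qed.

Hypothesis pisg : pi * sg != 0.

Lemma Mat_invertible k : (k <= N)%N -> invertible_mx (Mat k).
Proof.
move=> kN; rewrite /Mat; case: ifP => hk; apply: mx2_invertible pisg.
  exact: corner_det.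
by rewrite mulrA [shift _ * t]mulrC t_shift ?corner_det ?corner_t ?hk.
Qed.

Lemma Mat_period : ~~ odd N -> psum bb N = 0 -> psum cc N = 0 -> Mat N = Mat 0.
Proof.
by move=> hN hb hc; rewrite /Mat /diagl /diagr /corner (negbTE hN) hb hc /psum !big_ord0.
Qed.

End Intertwiner.

(* The pattern 0, a, 0, a, -y, 0 of the constant terms of even partial sums. *)
Definition shape (R : zmodType) (a y : R) (i : nat) : R :=
  match i with 1 | 3 => a | 4 => - y | _ => 0 end.

Lemma pair_sums (R : comNzRingType) (A : nat -> R) :
  A 0%N + A 1%N = 0 -> A 1%N + A 2%N = 0 -> \sum_(j < 5) A j = 0 ->
  (forall i, (i <= 5)%N -> \sum_(j < i) A j = shape (A 0%N) (A 4%N) i) /\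
  A 0%N + A 4%N = - A 3%N.
Proof.
move=> h01 h12 hsum.
have eA1 : A 1%N = - A 0%N by apply/eqP; rewrite -addr_eq0 addrC h01.
have eA2 : A 2%N = A 0%N by apply/eqP; rewrite -[A 0%N]opprK -eA1 -addr_eq0 addrC h12.
have eA3 : A 3%N = - (A 0%N + A 4%N).
  move: hsum; rewrite !big_ord_recr big_ord0 /= eA1 eA2 => hsum.
  by apply/eqP; rewrite -subr_eq0 -hsum; apply/eqP; ring.
split; last by rewrite eA3 opprK.
case=> [|[|[|[|[|[|//]]]]]] _; rewrite ?big_ord_recr big_ord0 /= ?eA1 ?eA2 ?eA3; ring.
Qed.

Lemma shape_corner (R : comNzRingType) (a y e y' : R) i :
  let pi := e * y' * (a + y) in let sg := a * y * (e + y') in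
  let rh := e * y - a * y' in
  sg * shape e y' i - pi * shape a y i - rh * shape a y i * shape e y' i = 0.
Proof. by case: i => [|[|[|[|[|i]]]]] /=; ring. Qed.

Definition rot (m : nat) (f : 'I_10 -> Z) (k : nat) : Z := f (idx (m + k)).

Lemma idx_val k : nat_of_ord (idx k) = (k %% 10)%N.
Proof. by rewrite /idx inordK // ltn_pmod. Qed.

Lemma idx_addl a k : idx (idx a + k) = idx (a + k).
Proof. by apply: val_inj => /=; rewrite !idx_val modnDml. Qed.

Lemma Bsum_rot f m k : Bsum f (idx (m + k)) = rot m f k + rot m f k.+1.
Proof. by rewrite /Bsum idx_addl -addnA addn1. Qed.

Lemma psum_rot m f : psum (rot m f) 10 = \sum_(i < 10) f i.
Proof.
have rot_inj : injective (fun i : 'I_10 => idx (m + i.+1)).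
  move=> i j /(congr1 val); rewrite /= !idx_val => h.
  by apply: ord_inj; move: (ltn_ord i) (ltn_ord j) h; lia.
exact/esym/(reindex_inj rot_inj).
Qed.

(* Rotating by an even m preserves the parity of arrows. *)
Lemma xmat_rot f m k : ~~ odd m -> xmat f (idx (m + k)) = XB (rot m f) k.
Proof. by move=> me; rewrite /xmat /XB idx_val odd_mod // oddD (negbTE me). Qed.

Lemma ymat_rot f m k : ~~ odd m -> ymat f (idx (m + k)) = YB (rot m f) k.
Proof. by move=> me; rewrite /ymat /YB idx_val odd_mod // oddD (negbTE me). Qed.

(* A closed chain of invertible intertwiners along the cycle rotated by an
   even m is an isomorphism M(b) -> M(c): vertex v receives the matrix of its
   position rel v + 1 in {1, ..., 10}. *)
Lemma Miso_of_chain b c m (Phi : nat -> 'M[Z]_2) :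
  ~~ odd m -> (m < 10)%N -> Phi 10 = Phi 0 ->
  (forall k, (k <= 10)%N -> invertible_mx (Phi k)) ->
  (forall k, (k < 10)%N ->
     Phi k.+1 *m XB (rot m b) k.+1 = XB (rot m c) k.+1 *m Phi k /\
     Phi k *m YB (rot m b) k.+1 = YB (rot m c) k.+1 *m Phi k.+1) ->
  Miso b c.
Proof.
move=> me m10 period inv step.
pose rel (v : 'I_10) := ((v + 9 - m) %% 10)%N.
have rel_lt v : (rel v < 10)%N by exact: ltn_pmod.
have relE v : v = idx (m + (rel v).+1).
  by apply: val_inj; rewrite /= idx_val /rel; move: (ltn_ord v); lia.
have rel_prev (v : 'I_10) : Phi (rel (idx (v + 9))).+1 = Phi (rel v).
  have -> : (rel (idx (v + 9))).+1 = if rel v == 0%N then 10 else rel v.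
    by rewrite /rel idx_val; case: eqP; move: (ltn_ord v) m10; lia.
  by case: eqP => // ->.
exists (fun v => Phi (rel v).+1); split; first by move=> v; exact: inv.
have xmatE f j : xmat f j = XB (rot m f) (rel j).+1.
  by rewrite {1}(relE j) xmat_rot.
have ymatE f j : ymat f j = YB (rot m f) (rel j).+1.
  by rewrite {1}(relE j) ymat_rot.
split=> j; rewrite rel_prev ?xmatE ?ymatE.
- exact: (step _ (rel_lt j)).1.
- exact: (step _ (rel_lt j)).2.
Qed.

(* Under the hypotheses of the theorem, read from l - 1, the constant terms
   of the even partial sums follow the pattern with a = B_l(0) and
   y = B_(l+8)(0), and a, y, a + y = - B_(l+6)(0) are nonzero. *)
Lemma cycle_constants (b : 'I_10 -> Z) (l : 'I_10) :
  \sum_(i < 10) b i = 0 ->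
  (forall i : 'I_10, odd i -> ~ dvdZ t (Bsum b i)) ->
  odd l ->
  dvdZ t (Bsum b l + Bsum b (idx (l + 2))) ->
  dvdZ t (Bsum b (idx (l + 2)) + Bsum b (idx (l + 4))) ->
  exists a y : CR, [/\ a != 0, y != 0, a + y != 0 &
    forall i, (i <= 5)%N -> c0 (psum (rot l.-1 b) (2 * i)) = shape a y i].
Proof.
move=> sb nb hl d1 d2; set m := l.-1.
have lm : l = idx (m + 1).
  have l0 : (0 < l)%N by move: hl; case: (nat_of_ord l).
  by apply: ord_inj; rewrite idx_val /m; move: l0 (ltn_ord l); lia.
have lkm k : idx (l + k) = idx (m + k.+1) by rewrite lm idx_addl -addnA add1n.
have odd_l k : odd (idx (l + k.*2)) by rewrite idx_val odd_mod // oddD hl odd_double.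
pose A j := c0 (rot m b (2 * j).+1 + rot m b (2 * j).+2).
have A_nz k : ~ dvdZ t (Bsum b (idx (m + k.+1))) -> c0 (rot m b k.+1 + rot m b k.+2) != 0.
  by move=> h; apply/eqP => h0; apply: h; rewrite Bsum_rot; exact/dvdZ_t.
have A_sums i : c0 (psum (rot m b) (2 * i)) = \sum_(j < i) A j.
  by rewrite psum_pairs c0_sum.
have A01 : A 0%N + A 1%N = 0.
  by move: d1; rewrite {1}lm !lkm !Bsum_rot => /dvdZ_t; rewrite c0D.
have A12 : A 1%N + A 2%N = 0.
  by move: d2; rewrite !lkm !Bsum_rot => /dvdZ_t; rewrite c0D.
have A_total : \sum_(j < 5) A j = 0 by rewrite -(A_sums 5%N) psum_rot sb.
have [A_shape A_04] := pair_sums A01 A12 A_total.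
exists (A 0%N), (A 4%N); split.
- by apply: (A_nz 0%N); rewrite -lm; exact: nb.
- by apply: (A_nz 8%N); rewrite -lkm; exact: (nb _ (odd_l 4%N)).
- by rewrite A_04 oppr_eq0; apply: (A_nz 6%N); rewrite -lkm; exact: (nb _ (odd_l 3%N)).
- by move=> i hi; rewrite A_sums A_shape.
Qed.

Theorem theorem2p7 (b c : 'I_10 -> Z) (l : 'I_10) :
  \sum_(i < 10) b i = 0 ->
  \sum_(i < 10) c i = 0 ->
  (forall i : 'I_10, odd i -> ~ dvdZ t (Bsum b i)) ->
  (forall i : 'I_10, odd i -> ~ dvdZ t (Bsum c i)) ->
  odd l ->
  dvdZ t (Bsum b l + Bsum b (idx (l + 2))) ->
  dvdZ t (Bsum b (idx (l + 2)) + Bsum b (idx (l + 4))) ->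
  (forall i : 'I_10, odd i -> i != l -> i != idx (l + 2) ->
     ~ dvdZ t (Bsum b i + Bsum b (idx (i + 2)))) ->
  dvdZ t (Bsum c l + Bsum c (idx (l + 2))) ->
  dvdZ t (Bsum c (idx (l + 2)) + Bsum c (idx (l + 4))) ->
  (forall i : 'I_10, odd i -> i != l -> i != idx (l + 2) ->
     ~ dvdZ t (Bsum c i + Bsum c (idx (i + 2)))) ->
  Miso b c.
Proof.
move=> sb sc nb nc hl db1 db2 _ dc1 dc2 _.
have [a [y [a0 y0 ay0 shape_b]]] := cycle_constants sb nb hl db1 db2.
have [e [y' [e0 y'0 ey0 shape_c]]] := cycle_constants sc nc hl dc1 dc2.
pose pi := e * y' * (a + y); pose sg := a * y * (e + y'); pose rh := e * y - a * y'.
pose bb := rot l.-1 b; pose cc := rot l.-1 c.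
have corner_t k : ~~ odd k -> (k <= 10)%N -> c0 (corner bb cc pi sg rh k) = 0.
  move=> ke k10; rewrite -(odd_double_half k) (negbTE ke) add0n -mul2n.
  rewrite c0_corner shape_b ?shape_c; try by move: k10; lia.
  exact: shape_corner.
have pisg : pi * sg != 0 by rewrite !mulf_neq0.
apply: (@Miso_of_chain _ _ l.-1 (Mat bb cc pi sg rh)).
- by move: hl; case: (nat_of_ord l) => //= n; rewrite negbK.
- by move: (ltn_ord l); lia.
- by apply: Mat_period; rewrite ?psum_rot.
- by move=> k; apply: Mat_invertible.
- by move=> k; apply: Mat_step.
Qed.
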